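(* Suppose $\mathcal I_{CAS}=\langle\mathcal I,\chi\rangle$ is a justified CAS-model of a DL-Lite$_R$ DKB $\mathcal K'$. Then $\mathcal I_{CAS}$ is not necessarily a justified CAS-model of every $\mathcal K\subset\mathcal K'$; that is, there exist a DKB $\mathcal K'$, a justified CAS-model $\mathcal I_{CAS}$ of $\mathcal K'$ and a DKB $\mathcal K\subset\mathcal K'$ such that $\mathcal I_{CAS}$ is not a justified CAS-model of $\mathcal K$.
   Context: DL-Lite$_R$: pairwise disjoint countably infinite sets $\mathrm{NC}$, $\mathrm{NR}$, $\mathrm{NI}$; a role is $R$ or $R^-$; concepts $C ::= A\mid\exists R$ (left), $D ::= A\mid\neg C\mid\exists R$ (right). Axioms: $C\sqsubseteq D$, $S\sqsubseteq R$, $\mathrm{Dis}(R,S)$, $\mathrm{Inv}(R,S)$, $\mathrm{Irr}(R)$ (no reflexivity), assertions $D(a)$, $R(a,b)$, usual semantics. Standard name assumption: an infinite set $\mathrm{NI}_S\subseteq\mathrm{NI}$ of standard names is the domain of every interpretation, $c^{\mathcal I}=c$ for $c\in\mathrm{NI}_S$. Axioms are identified with universal first-order sentences $\forall\vec x\,\phi_\alpha(\vec x)$ via the standard translation with right-hand existentials Skolemized by a unary Skolem function $f_R$ per atomic role; $\alpha(\vec e):=\phi_\alpha(\vec e)$. A DKB is a finite set of DL-Lite$_R$ axioms and defeasible axioms $\mathrm D(\alpha)$. Clashing assumption $\langle\alpha,\vec e\rangle$; clashing set: satisfiable set $S$ of assertions and negated assertions with $S\cup\{\alpha(\vec e)\}$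 unsatisfiable. $\langle\mathcal I,\chi\rangle$ ($\chi$ a set of clashing assumptions) is a CAS-model of $\mathcal K$ if $\mathcal I$ satisfies the non-defeasible axioms of $\mathcal K$ and $\mathcal I\models\phi_\alpha(\vec d)$ for all $\mathrm D(\alpha)\in\mathcal K$ and tuples $\vec d$ with $\langle\alpha,\vec d\rangle\notin\chi$. NI-congruent: same interpretation of all constants in $\mathrm{NI}$. $\langle\alpha,\vec e\rangle\in\chi$ is justified if some clashing set for it holds in every CAS-model $\langle\mathcal I',\chi\rangle$ of $\mathcal K$ NI-congruent to $\langle\mathcal I,\chi\rangle$; a CAS-model is justified if all its clashing assumptions are justified. *)

From Stdlib Require Import List Arith.
Import ListNotations.
Set Implicit Arguments.

(* Concept names NC, role names NR and individual names NI are all encoded by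
   [nat]; they live in different syntactic positions, hence are disjoint. *)

Inductive role : Type :=
| Rn   (p : nat)
| Rinv (p : nat).

(* left-hand side concepts  C ::= A | exists R *)
Inductive lconcept : Type :=
| LA  (a : nat)
| LEx (r : role).

(* right-hand side concepts  D ::= A | not C | exists R *)
Inductive rconcept : Type :=
| RA   (a : nat)
| RNeg (c : lconcept)
| REx  (r : role).

Inductive axiom : Type :=
| CIncl   (c : lconcept) (d : rconcept)
| RIncl   (s r : role)
| Dis     (r s : role)
| Inv     (r s : role)
| Irr     (r : role)
| CAssert (d : rconcept) (a : nat)
| RAssert (r : role) (a b : nat).

Inductive kitem : Type :=
| Strict (al : axiom)
| Defeasible (al : axiom).

Definition DKB := list kitem.

Definition dkb_proper_subset (K K' : DKB) : Prop :=
  (forall it, In it K -> In it K') /\ exists it, In it K' /\ ~ In it K.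

Section Sem.
(* [std] is the set NI_S of standard names (a subset of NI = nat) *)
Variable std : nat -> bool.

(* the domain of every interpretation: NI_S *)
Definition Dom := { n : nat | std n = true }.

Record interp : Type := {
  cI : nat -> Dom;
  cI_std : forall c (h : std c = true), cI c = exist _ c h;
  AI : nat -> Dom -> Prop;
  RI : nat -> Dom -> Dom -> Prop;
  fI : role -> Dom -> Dom                   (* Skolem function f_R *)
}.

Variable I : interp.

Definition holdsR (r : role) (x y : Dom) : Prop :=
  match r with
  | Rn p => RI I p x y
  | Rinv p => RI I p y x
  end.

(* ---- usual (non-Skolemized) semantics, used for (negated) assertions ---- *)
Definition lconceptD (c : lconcept) (x : Dom) : Prop :=
  match c with
  | LA a => AI I a x
  | LEx r => exists y, holdsR r x y
  end.

Definition rconceptD (d : rconcept) (x : Dom) : Prop :=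
  match d with
  | RA a => AI I a x
  | RNeg c => ~ lconceptD c x
  | REx r => exists y, holdsR r x y
  end.

Inductive literal : Type :=
| PosC (d : rconcept) (a : nat)
| NegC (d : rconcept) (a : nat)
| PosR (r : role) (a b : nat)
| NegR (r : role) (a b : nat).

Definition lit_holds (l : literal) : Prop :=
  match l with
  | PosC d a => rconceptD d (cI I a)
  | NegC d a => ~ rconceptD d (cI I a)
  | PosR r a b => holdsR r (cI I a) (cI I b)
  | NegR r a b => ~ holdsR r (cI I a) (cI I b)
  end.

(* ---- standard translation with Skolemization: alpha |-> forall xs, phi_alpha(xs) ---- *)

(* left-hand concept at x; an existential on the left becomes a universally
   quantified variable y (taken from the tuple) *)
Definition lhs_at (c : lconcept) (x : Dom) (l : list Dom) : option (Prop * list Dom) :=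
  match c, l with
  | LA a, l => Some (AI I a x, l)
  | LEx r, y :: l' => Some (holdsR r x y, l')
  | LEx _, [] => None
  end.

(* right-hand concept at x: exists R is Skolemized by f_R; not(exists R)
   becomes a universally quantified variable z (taken from the tuple) *)
Definition rhs_at (d : rconcept) (x : Dom) (l : list Dom) : option Prop :=
  match d, l with
  | RA b, [] => Some (AI I b x)
  | RNeg (LA a), [] => Some (~ AI I a x)
  | RNeg (LEx r), [z] => Some (~ holdsR r x z)
  | REx r, [] => Some (holdsR r x (fI I r x))
  | _, _ => None
  end.

(* phi_alpha(e).  Tuples e of the wrong shape (length) for alpha do not
   correspond to instances of the universal sentence; for them phi is [True]. *)
Definition phi (al : axiom) (e : list Dom) : Prop :=
  match al with
  | CIncl c d =>
      match e with
      | x :: l =>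
          match lhs_at c x l with
          | Some (P, l') => match rhs_at d x l' with Some Q => P -> Q | None => True end
          | None => True
          end
      | [] => True
      end
  | RIncl s r => match e with [x; y] => holdsR s x y -> holdsR r x y | _ => True end
  | Dis r s => match e with [x; y] => ~ (holdsR r x y /\ holdsR s x y) | _ => True end
  | Inv r s => match e with [x; y] => (holdsR r x y <-> holdsR s y x) | _ => True end
  | Irr r => match e with [x] => ~ holdsR r x x | _ => True end
  | CAssert d a => match rhs_at d (cI I a) e with Some Q => Q | None => True end
  | RAssert r a b => match e with [] => holdsR r (cI I a) (cI I b) | _ => True end
  end.

Definition sat_axiom (al : axiom) : Prop := forall e, phi al e.

End Sem.

Arguments literal : clear implicits.

Definition clash_assumption (std : nat -> bool) : Type := (axiom * list (Dom std))%type.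
Definition CAset (std : nat -> bool) : Type := clash_assumption std -> Prop.

Definition lits_hold std (I : interp std) (S : literal -> Prop) : Prop :=
  forall l, S l -> lit_holds I l.

Definition clashing_set std (S : literal -> Prop) (al : axiom) (e : list (Dom std)) : Prop :=
  (exists I : interp std, lits_hold I S) /\
  ~ (exists I : interp std, lits_hold I S /\ phi I al e).

Definition CAS_model std (K : DKB) (I : interp std) (chi : CAset std) : Prop :=
  (forall al, In (Strict al) K -> sat_axiom I al) /\
  (forall al, In (Defeasible al) K -> forall d, ~ chi (al, d) -> phi I al d).

Definition NI_congruent std (I I' : interp std) : Prop :=
  forall c, cI I c = cI I' c.

Definition justified_assumption std (K : DKB) (I : interp std) (chi : CAset std)
    (ca : clash_assumption std) : Prop :=
  exists S : literal -> Prop,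
    clashing_set S (fst ca) (snd ca) /\
    forall I' : interp std, CAS_model K I' chi -> NI_congruent I I' -> lits_hold I' S.

Definition justified_CAS_model std (K : DKB) (I : interp std) (chi : CAset std) : Prop :=
  CAS_model K I chi /\ forall ca, chi ca -> justified_assumption K I chi ca.

(* Take K' = {not A(a), D(A(a))} and K = {D(A(a))}, with the clashing
   assumption <A(a), ()>. In K' the strict axiom forces not A(a) in every
   CAS-model, so the assumption is justified by the clashing set {not A(a)}.
   Dropping that strict axiom admits the CAS-model in which A is everywhere
   true; it agrees with the original one on all names and satisfies A(a),
   so no clashing set for A(a) can hold in it and the assumption is no
   longer justified. *)
From Stdlib Require Import List Arith Eqdep_dec ssreflect ssrfun.
Import ListNotations.

Lemma lit_holds_of_strict_neg_assert {std} {K : DKB} {I : interp std} {chi} b c :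
  In (Strict (CAssert (RNeg (LA b)) c)) K -> CAS_model K I chi ->
  lit_holds I (NegC (RA b) c).
Proof. by move=> inK [strictK _]; apply: (strictK _ inK []). Qed.

Lemma clashing_set_neg_atom {std} b c :
  (exists I : interp std, ~ AI I b (cI I c)) ->
  @clashing_set std (eq (NegC (RA b) c)) (CAssert (RA b) c) [].
Proof.
move=> [I notAb]; split.
  by exists I => _ <-.
by move=> [J [holdsJ AbJ]]; exact: holdsJ _ erefl AbJ.
Qed.

Lemma not_justified_of_congruent_model {std} {K : DKB} {I I' : interp std} {chi}
  (ca : clash_assumption std) :
  CAS_model K I' chi -> NI_congruent I I' -> phi I' ca.1 ca.2 ->
  ~ justified_assumption K I chi ca.
Proof.
move=> modelI' congrI' phiI' [S [[_ clash] holdsS]].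
by apply: clash; exists I'; split; [exact: holdsS|].
Qed.

Section Counterexample.
Variable std : nat -> bool.
Variable a : nat.
Hypothesis std_a : std a = true.

Definition name_of (c : nat) : Dom std :=
  (match std c as s return std c = s -> Dom std with
   | true => fun h => exist _ c h
   | false => fun _ => exist _ a std_a
   end) erefl.

Lemma name_of_std c (h : std c = true) : name_of c = exist _ c h.
Proof.
rewrite /name_of; generalize (erefl (std c)); generalize (std c) at 2 3.
case=> e; last by exfalso; rewrite e in h.
by congr exist; apply: UIP_dec; decide equality.
Qed.

Definition atomic_interp (A : nat -> Dom std -> Prop) : interp std :=
  {| cI := name_of; cI_std := name_of_std; AI := A;
     RI := fun _ _ _ => False; fI := fun _ x => x |}.

Definition I_empty := atomic_interp (fun _ _ => False).
Definition I_full := atomic_interp (fun _ _ => True).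

Definition assert_A := CAssert (RA 0) a.
Definition K_big : DKB := [Strict (CAssert (RNeg (LA 0)) a); Defeasible assert_A].
Definition K_small : DKB := [Defeasible assert_A].
Definition chi_A : CAset std := eq (assert_A, []).

Lemma I_empty_CAS_model : CAS_model K_big I_empty chi_A.
Proof.
split=> al.
  by case=> [[<-]|[]//] [|? ?].
by case=> [//|[[<-]|[]//]] [|? ?] // /(_ erefl).
Qed.

Lemma I_empty_justified : justified_CAS_model K_big I_empty chi_A.
Proof.
split; first exact: I_empty_CAS_model.
move=> _ <-; exists (eq (NegC (RA 0) a)); split.
  by apply: clashing_set_neg_atom; exists I_empty.
move=> I' modelI' _ _ <-.
by apply: lit_holds_of_strict_neg_assert modelI'; left.
Qed.

Lemma K_small_proper_subset : dkb_proper_subset K_small K_big.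
Proof.
split; first by move=> it inK; right.
by exists (Strict (CAssert (RNeg (LA 0)) a)); split; [left|case=> [|[]]].
Qed.

Lemma I_full_CAS_model : CAS_model K_small I_full chi_A.
Proof. by split=> al; case=> [|[]] // [<-] [|? ?]. Qed.

Lemma I_empty_not_justified : ~ justified_CAS_model K_small I_empty chi_A.
Proof.
move=> [_ justified].
have congruent : NI_congruent I_empty I_full by [].
have A_full : phi I_full assert_A [] by [].
exact: (not_justified_of_congruent_model (assert_A, [])
  I_full_CAS_model congruent A_full (justified _ erefl)).
Qed.

End Counterexample.

Theorem proposition4 :
  forall std : nat -> bool,
    (forall n, exists m, n <= m /\ std m = true) ->
    exists (K' : DKB) (I : interp std) (chi : CAset std) (K : DKB),
      justified_CAS_model K' I chi /\
      dkb_proper_subset K K' /\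
      ~ justified_CAS_model K I chi.
Proof.
move=> std has_std; have [a [_ std_a]] := has_std 0.
exists (K_big a), (I_empty std a std_a), (chi_A std a), (K_small a).
split; [exact: I_empty_justified|split].
- exact: K_small_proper_subset.
- exact: I_empty_not_justified.
Qed.
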